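(* Let $\mathcal{H}$ be a finite-dimensional Hilbert space, $\mathcal{O}\in\mathcal{L}(\mathcal{H})$ Hermitian, $\rho$ a quantum state on $\mathcal{H}$, $n\geq1$ and $1\leq k\leq n$. Let \[\mathcal{O}_k=\frac{1}{n!}\sum_{\pi\in\mathfrak{S}_n}U_\pi\,U_{s_k}\,(\mathcal{O}\otimes I^{\otimes n-1})\,U_\pi^\dagger.\] Then $\mathbf{Var}[\mathcal{O}_k]\leq\dfrac{2k\|\mathcal{O}\|^2}{n}$, where $\|\mathcal{O}\|$ is the operator norm.
   Context: $\mathfrak{S}_n$ is the symmetric group on $\{1,\ldots,n\}$; for $\pi\in\mathfrak{S}_n$, $U_\pi$ is the unitary on $\mathcal{H}^{\otimes n}$ with $U_\pi\ket{\psi_1}\cdots\ket{\psi_n}=\ket{\psi_{\pi^{-1}(1)}}\cdots\ket{\psi_{\pi^{-1}(n)}}$. $s_k$ is the cyclic shift on the first $k$ elements ($s_k(i)=i+1$ for $i<k$, $s_k(k)=1$, $s_k(i)=i$ for $i>k$). For a Hermitian $\mathcal{Q}$ on $\mathcal{H}^{\otimes n}$, $\mathbf{Var}[\mathcal{Q}]=\operatorname{tr}(\mathcal{Q}^2\rho^{\otimes n})-\operatorname{tr}(\mathcal{Q}\rho^{\otimes n})^2$, the variance of the outcome of measuring $\rho^{\otimes n}$ with observable $\mathcal{Q}$. *)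

From HB Require Import structures.
From mathcomp Require Import all_boot all_order all_algebra all_fingroup.
From mathcomp Require Import complex.
From mathcomp Require Import classical_sets reals.
From mathcomp Require Import zify.
Set Implicit Arguments.
Unset Strict Implicit.
Unset Printing Implicit Defensive.
Import Order.TTheory GRing.Theory Num.Theory.
Local Open Scope ring_scope.

(* Hilbert space H = C^I for a finite basis type I (dim H = #|I|).
   H^{(x) n} = C^{T} with T = {ffun 'I_n -> I} (product basis).
   Operators on C^T are represented by their matrices T -> T -> C. *)

Section Ops.
Variable R : rcfType.
Local Notation C := R[i].

Definition op (T : finType) := T -> T -> C.

Definition opmul (T : finType) (A B : op T) : op T :=
  fun x y => \sum_(z : T) A x z * B z y.

Definition opadj (T : finType) (A : op T) : op T :=
  fun x y => conjc (A y x).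

Definition optr (T : finType) (A : op T) : C := \sum_(x : T) A x x.

Definition opscale (T : finType) (c : C) (A : op T) : op T :=
  fun x y => c * A x y.

Definition opsum (T : finType) (J : finType) (F : J -> op T) : op T :=
  fun x y => \sum_(j : J) F j x y.

Definition is_hermitian (T : finType) (A : op T) : Prop :=
  forall x y, A x y = conjc (A y x).

Definition is_state (T : finType) (rho : op T) : Prop :=
  [/\ is_hermitian rho,
      forall v : T -> C, 0 <= \sum_(x : T) \sum_(y : T) conjc (v x) * rho x y * v y
    & optr rho = 1].

(* U_pi on H^{(x) n}:  U_pi (psi_1 .. psi_n) = psi_{pi^-1(1)} .. psi_{pi^-1(n)};
   on product basis vectors e_f, U_pi e_f = e_{f o pi^-1}. *)
Definition permop (I : finType) (n : nat) (pi : 'S_n) : op {ffun 'I_n -> I} :=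
  fun g f => (g == [ffun j => f ((pi^-1)%g j)])%:R.

Definition embed_at (I : finType) (n : nat) (i0 : 'I_n) (O : op I)
  : op {ffun 'I_n -> I} :=
  fun g f => O (g i0) (f i0) * [forall j, (j != i0) ==> (g j == f j)]%:R.

Definition tens_pow (I : finType) (n : nat) (rho : op I) : op {ffun 'I_n -> I} :=
  fun g f => \prod_(j < n) rho (g j) (f j).

Definition variance (I : finType) (n : nat) (rho : op I) (Q : op {ffun 'I_n -> I}) : C :=
  optr (opmul (opmul Q Q) (@tens_pow I n rho)) - (optr (opmul Q (@tens_pow I n rho))) ^+ 2.

End Ops.

(* cyclic shift on the first k elements (0-indexed: i -> i+1 for i+1 < k,
   k-1 -> 0, fixed otherwise); k is truncated at n so the map is always a
   permutation (only used with k <= n). *)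
Local Open Scope nat_scope.
Definition shift_nat (n k i : nat) : nat :=
  if i.+1 < minn k n then i.+1 else if i.+1 == minn k n then 0 else i.

Lemma shift_nat_lt n k (i : 'I_n) : shift_nat n k i < n.
Proof.
rewrite /shift_nat; have := ltn_ord i; have := geq_minr k n.
case: ifP => [h1|_] h2 h3; first by lia.
by case: ifP => _; lia.
Qed.

Definition shift_fun (n k : nat) (i : 'I_n) : 'I_n := Ordinal (shift_nat_lt k i).

Lemma shift_fun_inj n k : injective (@shift_fun n k).
Proof.
move=> [i hi] [j hj] /(congr1 val) /=; rewrite /shift_nat => h.
apply: val_inj => /=; move: h.
case: ifP => a; case: ifP => b; try case: ifP => c; try case: ifP => d;
  move/eqP: a; move/eqP: b; try move/eqP: c; try move/eqP: d; lia.
Qed.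

Definition shift_perm (n k : nat) : 'S_n := perm (@shift_fun_inj n k).

Local Open Scope ring_scope.
Section Norm.
Variable R : realType.
Local Notation C := R[i].

Definition vnorm (I : finType) (v : I -> C) : R :=
  Num.sqrt (\sum_(x : I) ((complex.Re (v x)) ^+ 2 + (complex.Im (v x)) ^+ 2)).

Definition opnorm (I : finType) (O : op R I) : R :=
  sup [set r : R | exists v : I -> C,
         vnorm v = 1 /\ r = vnorm (fun x => \sum_(y : I) O x y * v y)].

Definition O_k (I : finType) (n : nat) (hn : (0 < n)%N) (k : nat) (O : op R I)
  : op R {ffun 'I_n -> I} :=
  opscale (n`!%:R)^-1
    (opsum (fun pi : 'S_n =>
       opmul (opmul (opmul (@permop R I n pi) (@permop R I n (shift_perm n k)))
                    (@embed_at R I n (Ordinal hn) O))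
             (opadj (@permop R I n pi)))).

End Norm.

(* Write B := U_{s_k} (O ⊗ I^{⊗ n-1}) and <X, Y> := tr(X^† Y ρ^{⊗n}), a positive
   semidefinite form.  O_k is the average of the conjugates of B by all permutations of the
   tensor factors; it is Hermitian because B^† is the conjugate of B by a reflection of the
   first k factors, so Var[O_k] = <O_k - μ, O_k - μ> with μ := tr(B ρ^{⊗n}) = tr(O_k ρ^{⊗n}).
   Cut m := ⌊n/k⌋ disjoint blocks of k consecutive factors and let H_j be the conjugate of B
   by the rotation moving the first block onto the j-th one.  Averaging over all
   permutations forgets j, so O_k - μ is also the permutation average of
   W := (1/m) Σ_j (H_j - μ), and convexity of the form together with its permutation
   invariance gives Var[O_k] <= <W, W>.  Operators acting on disjoint sets of factors are
   uncorrelated in a product state, hence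
   <W, W> = (1/m²) Σ_j (<H_j, H_j> - |μ|²) <= tr(O^† O ρ)/m <= ‖O‖²/m <= 2k‖O‖²/n. *)

From HB Require Import structures.
From mathcomp Require Import all_boot all_order all_algebra all_fingroup.
From mathcomp Require Import complex.
From mathcomp Require Import boolp classical_sets reals.
From mathcomp Require Import zify.
From mathcomp.algebra_tactics Require Import ring.
Import Order.TTheory GRing.Theory Num.Theory.
Local Open Scope ring_scope.
Local Open Scope complex_scope.
Set Implicit Arguments. Unset Strict Implicit. Unset Printing Implicit Defensive.

(** * Operators, expectations and covariances *)

Section OperatorAlgebra.
Variables (R : rcfType) (T : finType).
Local Notation C := R[i].
Local Notation op := (op R T).
Implicit Types (a b : C) (A B X Y : op).

Definition opid : op := fun x y => (x == y)%:R.

Definition opsub (A B : op) : op := fun x y => A x y - B x y.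

Definition psd (A : op) : Prop :=
  forall v : T -> C, 0 <= \sum_x \sum_y conjc (v x) * A x y * v y.

Lemma sum_delta_mull (U : finType) (w : U) (G : U -> C) :
  \sum_z (z == w)%:R * G z = G w.
Proof.
rewrite (bigD1 w) //= eqxx mul1r big1 ?addr0 // => z /negbTE ->.
by rewrite mul0r.
Qed.

Lemma op_ext (A B : op) : (forall x y, A x y = B x y) -> A = B.
Proof. by move=> eAB; apply/funext => x; apply/funext => y; exact: eAB. Qed.

Lemma opadj_opsum (J : finType) (X : J -> op) :
  opadj (opsum X) = opsum (fun j => opadj (X j)).
Proof. by apply: op_ext => x y; rewrite /opadj /opsum rmorph_sum. Qed.

Lemma opadj_opscale a X : opadj (opscale a X) = opscale (conjc a) (opadj X).
Proof. by apply: op_ext => x y; rewrite /opadj /opscale rmorphM. Qed.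

Lemma opadj_opsub X Y : opadj (opsub X Y) = opsub (opadj X) (opadj Y).
Proof. by apply: op_ext => x y; rewrite /opadj /opsub rmorphB. Qed.

Lemma opadj_opid : opadj opid = opid.
Proof. by apply: op_ext => x y; rewrite /opadj /opid conjc_nat eq_sym. Qed.

Lemma opmul_opsuml (J : finType) (X : J -> op) Y :
  opmul (opsum X) Y = opsum (fun j => opmul (X j) Y).
Proof.
apply: op_ext => x y; rewrite /opmul /opsum exchange_big /=.
by apply: eq_bigr => z _; rewrite mulr_suml.
Qed.

Lemma opmul_opsumr (J : finType) X (Y : J -> op) :
  opmul X (opsum Y) = opsum (fun j => opmul X (Y j)).
Proof.
apply: op_ext => x y; rewrite /opmul /opsum exchange_big /=.
by apply: eq_bigr => z _; rewrite mulr_sumr.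
Qed.

Lemma opmul_opscalel a X Y : opmul (opscale a X) Y = opscale a (opmul X Y).
Proof.
apply: op_ext => x y; rewrite /opmul /opscale mulr_sumr.
by apply: eq_bigr => z _; rewrite mulrA.
Qed.

Lemma opmul_opscaler a X Y : opmul X (opscale a Y) = opscale a (opmul X Y).
Proof.
apply: op_ext => x y; rewrite /opmul /opscale mulr_sumr.
by apply: eq_bigr => z _; rewrite mulrCA.
Qed.

Lemma opmul_opsubl X1 X2 Y : opmul (opsub X1 X2) Y = opsub (opmul X1 Y) (opmul X2 Y).
Proof.
apply: op_ext => x y; rewrite /opmul /opsub -sumrB.
by apply: eq_bigr => z _; rewrite mulrBl.
Qed.

Lemma opmul_opsubr X Y1 Y2 : opmul X (opsub Y1 Y2) = opsub (opmul X Y1) (opmul X Y2).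
Proof.
apply: op_ext => x y; rewrite /opmul /opsub -sumrB.
by apply: eq_bigr => z _; rewrite mulrBr.
Qed.

Lemma opmulA X Y Z : opmul (opmul X Y) Z = opmul X (opmul Y Z).
Proof.
apply: op_ext => x y; rewrite /opmul; under eq_bigr do rewrite mulr_suml.
rewrite exchange_big /=; apply: eq_bigr => w _; rewrite mulr_sumr.
by apply: eq_bigr => z _; rewrite mulrA.
Qed.

Lemma opmul_opidl X : opmul opid X = X.
Proof.
apply: op_ext => x y; rewrite /opmul -[RHS](sum_delta_mull x (X^~ y)).
by apply: eq_bigr => z _; rewrite /opid eq_sym.
Qed.

Lemma opmul_opidr X : opmul X opid = X.
Proof.
apply: op_ext => x y; rewrite /opmul -[RHS](sum_delta_mull y (X x)).
by apply: eq_bigr => z _; rewrite /opid mulrC.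
Qed.

Lemma hermitian_opadj X : is_hermitian X -> opadj X = X.
Proof. by move=> hX; apply: op_ext => x y; rewrite /opadj -hX. Qed.

Lemma opadj_hermitian X : opadj X = X -> is_hermitian X.
Proof. by move=> adjX x y; rewrite -{1}adjX. Qed.

End OperatorAlgebra.

Arguments opid {R T}.

Section Expectation.
Variables (R : rcfType) (T : finType) (D : op R T).
Local Notation C := R[i].
Local Notation op := (op R T).
Implicit Types (a b : C) (X Y : op).

Definition expect X : C := optr (opmul X D).

Definition inner X Y : C := expect (opmul (opadj X) Y).

Definition center X : op := opsub X (opscale (expect X) opid).

Lemma expectE X : expect X = \sum_x \sum_y X x y * D y x.
Proof. by []. Qed.

Lemma innerE X Y :
  inner X Y = \sum_w \sum_x \sum_y conjc (X w x) * Y w y * D y x.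
Proof.
rewrite /inner expectE.
under eq_bigr => x _ do under eq_bigr => y _ do rewrite big_distrl /=.
by under eq_bigr => x _ do rewrite exchange_big /=; rewrite exchange_big.
Qed.

Lemma expect_opid : expect opid = optr D.
Proof. by rewrite /expect opmul_opidl. Qed.

Lemma expect_opsum (J : finType) (X : J -> op) :
  expect (opsum X) = \sum_j expect (X j).
Proof.
rewrite expectE; under [RHS]eq_bigr do rewrite expectE.
rewrite [RHS]exchange_big /=; apply: eq_bigr => x _.
by rewrite [RHS]exchange_big /=; apply: eq_bigr => y _; rewrite mulr_suml.
Qed.

Lemma expect_opscale a X : expect (opscale a X) = a * expect X.
Proof.
rewrite !expectE mulr_sumr; apply: eq_bigr => x _.
by rewrite mulr_sumr; apply: eq_bigr => y _; rewrite mulrA.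
Qed.

Lemma expect_opsub X Y : expect (opsub X Y) = expect X - expect Y.
Proof.
rewrite !expectE -sumrB; apply: eq_bigr => x _.
by rewrite -sumrB; apply: eq_bigr => y _; rewrite mulrBl.
Qed.

Lemma inner_opsum (J K : finType) (X : J -> op) (Y : K -> op) :
  inner (opsum X) (opsum Y) = \sum_i \sum_l inner (X i) (Y l).
Proof.
rewrite /inner opadj_opsum opmul_opsuml expect_opsum; apply: eq_bigr => i _.
by rewrite opmul_opsumr expect_opsum.
Qed.

Lemma inner_opscalel a X Y : inner (opscale a X) Y = conjc a * inner X Y.
Proof. by rewrite /inner opadj_opscale opmul_opscalel expect_opscale. Qed.

Lemma inner_opscaler b X Y : inner X (opscale b Y) = b * inner X Y.
Proof. by rewrite /inner opmul_opscaler expect_opscale. Qed.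

Lemma inner_opsub X1 X2 Y1 Y2 :
  inner (opsub X1 X2) (opsub Y1 Y2)
  = inner X1 Y1 - inner X1 Y2 - inner X2 Y1 + inner X2 Y2.
Proof.
rewrite /inner opadj_opsub opmul_opsubl !opmul_opsubr !expect_opsub.
ring.
Qed.

Lemma inner_opid_l Y : inner opid Y = expect Y.
Proof. by rewrite /inner opadj_opid opmul_opidl. Qed.

Lemma inner_opsum_orthogonal (J : finType) (G : J -> op) :
  (forall j l, j != l -> inner (G j) (G l) = 0) ->
  inner (opsum G) (opsum G) = \sum_j inner (G j) (G j).
Proof.
move=> orth; rewrite inner_opsum; apply: eq_bigr => j _.
by rewrite (bigD1 j) //= big1 ?addr0 // => l lj; apply: orth; rewrite eq_sym.
Qed.

Hypothesis D_psd : psd D.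

Lemma inner_ge0 X : 0 <= inner X X.
Proof.
rewrite innerE; apply: sumr_ge0 => w _.
apply: le_trans (D_psd (fun y => conjc (X w y))) _.
rewrite [X in _ <= X]exchange_big le_eqVlt; apply/orP; left; apply/eqP.
by apply: eq_bigr => x _; apply: eq_bigr => y _; rewrite conjcK; ring.
Qed.

Lemma inner_opsum_le (K : finType) (Y : K -> op) :
  inner (opsum Y) (opsum Y) <= #|K|%:R * \sum_i inner (Y i) (Y i).
Proof.
pose S := \sum_i inner (Y i) (Y i).
pose G := \sum_i \sum_l inner (Y i) (Y l).
have sum_const (c : C) : \sum_(i : K) c = #|K|%:R * c by rewrite sumr_const mulr_natl.
have dev : \sum_i \sum_l inner (opsub (Y i) (Y l)) (opsub (Y i) (Y l))
    = 2%:R * (#|K|%:R * S - G).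
  under eq_bigr => i _ do under eq_bigr => l _ do rewrite inner_opsub.
  under eq_bigr => i _ do rewrite big_split /= !sumrB.
  rewrite big_split /= !sumrB.
  have -> : \sum_i \sum_(l : K) inner (Y i) (Y i) = #|K|%:R * S.
    by under eq_bigr do rewrite sum_const; rewrite -mulr_sumr.
  have -> : \sum_i \sum_l inner (Y l) (Y i) = G by rewrite exchange_big.
  rewrite sum_const -/S -/G; ring.
rewrite inner_opsum -/G -subr_ge0 -(pmulr_rge0 _ (ltr0n C 2)) -dev.
by apply: sumr_ge0 => i _; apply: sumr_ge0 => l _; exact: inner_ge0.
Qed.

Hypothesis D_herm : is_hermitian D.

Lemma expect_opadj X : expect (opadj X) = conjc (expect X).
Proof.
rewrite !expectE rmorph_sum exchange_big /=; apply: eq_bigr => x _.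
rewrite rmorph_sum; apply: eq_bigr => y _.
by rewrite rmorphM /= [D x y]D_herm.
Qed.

Lemma inner_opid_r X : inner X opid = conjc (expect X).
Proof. by rewrite /inner opmul_opidr expect_opadj. Qed.

Hypothesis D_tr : optr D = 1.

Lemma inner_center X Y :
  inner (center X) (center Y) = inner X Y - conjc (expect X) * expect Y.
Proof.
rewrite inner_opsub !inner_opscalel !inner_opscaler inner_opid_l inner_opid_r.
by rewrite inner_opid_l expect_opid D_tr; ring.
Qed.

Lemma inner_center_self Q : is_hermitian Q ->
  inner (center Q) (center Q) = expect (opmul Q Q) - expect Q ^+ 2.
Proof.
move=> /hermitian_opadj adjQ.
have real_expect : conjc (expect Q) = expect Q by rewrite -expect_opadj adjQ.
by rewrite inner_center real_expect /inner adjQ expr2.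
Qed.

End Expectation.

Section Decomposition.
Variables (R : rcfType) (T : finType).
Local Notation C := R[i].

Lemma psd_decomposition (U : finType) (A : op R T) (d : U -> C) (w : U -> T -> C) :
  (forall t, 0 <= d t) -> (forall x y, A x y = \sum_t d t * w t x * conjc (w t y)) ->
  psd A.
Proof.
move=> d_ge0 dA v.
pose c t := \sum_y conjc (w t y) * v y.
have -> : \sum_x \sum_y conjc (v x) * A x y * v y = \sum_t d t * (conjc (c t) * c t).
  under eq_bigr => x _ do under eq_bigr => y _ do rewrite dA mulr_sumr mulr_suml.
  under eq_bigr => x _ do rewrite exchange_big /=.
  rewrite exchange_big /=; apply: eq_bigr => t _.
  rewrite /c rmorph_sum mulr_suml mulr_sumr; apply: eq_bigr => x _.
  rewrite mulr_sumr mulr_sumr; apply: eq_bigr => y _.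
  by rewrite rmorphM /= conjcK; ring.
apply: sumr_ge0 => t _; apply: mulr_ge0 => //.
by rewrite mulrC; exact: mul_conjC_ge0.
Qed.

Lemma quadform_orthonormal_decomposition (J : finType) (A : op R T)
    (d : J -> C) (u : J -> T -> C) :
  (forall x y, A x y = \sum_l d l * u l x * conjc (u l y)) ->
  (forall i l, \sum_x conjc (u i x) * u l x = (i == l)%:R) ->
  forall i, \sum_x \sum_y conjc (u i x) * A x y * u i y = d i.
Proof.
move=> dA u_orth i.
transitivity (\sum_l d l * (i == l)%:R * conjc (i == l)%:R).
  under eq_bigr => x _ do under eq_bigr => y _ do rewrite dA mulr_sumr mulr_suml.
  under eq_bigr => x _ do rewrite exchange_big /=.
  rewrite exchange_big /=; apply: eq_bigr => l _.
  rewrite -u_orth rmorph_sum -mulrA big_distrlr mulr_sumr; apply: eq_bigr => x _.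
  rewrite mulr_sumr; apply: eq_bigr => y _.
  by rewrite rmorphM /= conjcK; ring.
under eq_bigr => l _ do rewrite conjc_nat -mulrA -natrM mulnb andbb mulrC eq_sym.
exact: sum_delta_mull.
Qed.

Lemma state_decomposition (rho : op R T) : is_state rho ->
  exists (d : 'I_#|T| -> C) (u : 'I_#|T| -> T -> C),
    [/\ forall i, 0 <= d i,
        forall x y, rho x y = \sum_i d i * u i x * conjc (u i y)
      & forall i, \sum_x u i x * conjc (u i x) = 1].
Proof.
case=> rho_herm rho_psd _.
pose M : 'M[C]_#|T| := \matrix_(i, j) rho (enum_val i) (enum_val j).
have M_normal : M \is normalmx.
  have M_herm : (M ^t*)%sesqui = M.
    by apply/matrixP => i j; rewrite !mxE [RHS]rho_herm.
  by apply/normalmxP; rewrite M_herm.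
(* [M = P^† diag(d) P] with [P] unitary: the eigenvectors are the conjugated rows of [P]. *)
pose P := spectralmx M.
pose d i := spectral_diag M 0 i.
pose u i x := conjc (P i (enum_rank x)).
have rho_dec x y : rho x y = \sum_i d i * u i x * conjc (u i y).
  have -> : rho x y = M (enum_rank x) (enum_rank y) by rewrite mxE !enum_rankK.
  have /orthomx_spectralP -> := M_normal.
  rewrite invmx_unitary ?spectral_unitarymx // mul_mx_diag !mxE.
  by apply: eq_bigr => l _; rewrite !mxE /d /u conjcK; ring.
have u_orth i l : \sum_x conjc (u i x) * u l x = (i == l)%:R.
  have /unitarymxP/matrixP/(_ i l) := spectral_unitarymx M.
  rewrite !mxE => <-; rewrite (eq_bigl (fun x => x \in T)) // big_enum_val.
  by apply: eq_bigr => j _; rewrite /u conjcK enum_valK !mxE.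
exists d, u; split=> // [i|i].
  by rewrite -(quadform_orthonormal_decomposition rho_dec u_orth); exact: rho_psd.
transitivity (\sum_x conjc (u i x) * u i x); last by rewrite u_orth eqxx.
by apply: eq_bigr => x _; rewrite mulrC.
Qed.

End Decomposition.

Section TensorPower.
Variables (R : rcfType) (I : finType) (n : nat) (rho : op R I).
Local Notation C := R[i].
Local Notation rhon := (@tens_pow R I n rho).

Lemma tens_pow_hermitian : is_hermitian rho -> is_hermitian rhon.
Proof.
by move=> rho_herm g f; rewrite /tens_pow rmorph_prod; apply: eq_bigr => j _.
Qed.

Lemma tens_pow_trace : optr rhon = optr rho ^+ n.
Proof.
rewrite /optr /tens_pow -(bigA_distr_bigA (fun (j : 'I_n) x => rho x x)) /=.
by rewrite prodr_const card_ord.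
Qed.

Lemma tens_pow_psd : is_state rho -> psd rhon.
Proof.
move=> /state_decomposition [d [u [d_ge0 rho_dec _]]].
apply: (@psd_decomposition _ _ _ _ (fun t : {ffun 'I_n -> 'I_#|I|} => \prod_j d (t j))
          (fun t (g : {ffun 'I_n -> I}) => \prod_j u (t j) (g j))) => [t|g f].
  exact: prodr_ge0.
rewrite /tens_pow; under eq_bigr => j _ do rewrite rho_dec.
rewrite bigA_distr_bigA /=; apply: eq_bigr => t _.
by rewrite rmorph_prod -!big_split.
Qed.

Lemma tens_pow_state : is_state rho -> is_state rhon.
Proof.
move=> rho_state; have [rho_herm _ rho_tr] := rho_state.
split; [exact: tens_pow_hermitian | exact: tens_pow_psd |].
by rewrite tens_pow_trace rho_tr expr1n.
Qed.

Lemma embed_atE (i0 : 'I_n) (X : op R I) g f :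
  embed_at i0 X g f = \prod_j (if j == i0 then X (g j) (f j) else (g j == f j)%:R).
Proof.
rewrite /embed_at (bigD1 i0) //= eqxx; congr (_ * _).
have [/forallP agree|/forallPn [j]] := boolP [forall j, (j != i0) ==> (g j == f j)].
  rewrite big1 // => j ji0; have /implyP/(_ ji0)/eqP -> := agree j.
  by rewrite (negbTE ji0) eqxx.
rewrite negb_imply => /andP [ji0 /negbTE gfj].
by rewrite (bigD1 j) //= (negbTE ji0) gfj mul0r.
Qed.

Lemma inner_embed_at (i0 : 'I_n) (X Y : op R I) : optr rho = 1 ->
  inner rhon (embed_at i0 X) (embed_at i0 Y) = inner rho X Y.
Proof.
move=> rho_tr.
pose E (Z : op R I) (j : 'I_n) a b : C := if j == i0 then Z a b else (a == b)%:R.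
transitivity (\prod_j \sum_a \sum_b \sum_c conjc (E X j a b) * E Y j a c * rho c b).
  rewrite innerE bigA_distr_bigA; apply: eq_bigr => w _.
  rewrite bigA_distr_bigA; apply: eq_bigr => g _.
  rewrite bigA_distr_bigA; apply: eq_bigr => z _.
  by rewrite !embed_atE rmorph_prod -!big_split.
rewrite (bigD1 i0) //= [X in _ * X]big1 ?mulr1 => [|j /negbTE ji0]; first by rewrite /E eqxx innerE.
rewrite -rho_tr; apply: eq_bigr => a _; rewrite /E ji0.
rewrite (bigD1 a) //= [X in _ + X]big1 ?addr0 => [|b /negbTE ba]; last first.
  by rewrite big1 // => c _; rewrite eq_sym ba conjc0 !mul0r.
rewrite eqxx conjc1 -[RHS](sum_delta_mull a (fun c => rho c a)).
by apply: eq_bigr => c _; rewrite mul1r eq_sym.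
Qed.

End TensorPower.

Section OperatorNorm.
Variables (R : realType) (I : finType).
Local Notation C := R[i].

Lemma vnorm_sqE (w : I -> C) : (vnorm w ^+ 2)%:C = \sum_x w x * conjc (w x).
Proof.
rewrite /vnorm sqr_sqrtr; last first.
  by apply: sumr_ge0 => x _; apply: addr_ge0; apply: sqr_ge0.
rewrite rmorph_sum; apply: eq_bigr => x _.
by rewrite -sqr_normc -add_Re2_Im2.
Qed.

Lemma vnorm_eq1 (w : I -> C) : \sum_x w x * conjc (w x) = 1 -> vnorm w = 1.
Proof.
move=> w1; have /(congr1 (@complex.Re R)) /= := vnorm_sqE w; rewrite w1 /= => w_sq.
by apply/eqP; rewrite -(eqrXn2 (n := 2)) ?sqrtr_ge0 // w_sq expr1n.
Qed.

Lemma opnorm_ub (O : op R I) (v : I -> C) : vnorm v = 1 ->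
  vnorm (fun x => \sum_y O x y * v y) <= opnorm O.
Proof.
have bounded (w : I -> C) : vnorm w = 1 ->
    vnorm (fun x => \sum_y O x y * w y) ^+ 2 <= complex.Re (\sum_x (\sum_y `|O x y|) ^+ 2).
  move=> w1; have w_sum : \sum_y w y * conjc (w y) = 1 by rewrite -vnorm_sqE w1 expr1n.
  have w_le1 y : `|w y| <= 1.
    rewrite -(ler_pXn2r (n := 2)) ?nnegrE ?ler01 // expr1n sqr_normc -w_sum.
    rewrite (bigD1 y) //= lerDl; apply: sumr_ge0 => z _; exact: mul_conjC_ge0.
  rewrite -lecR vnorm_sqE RRe_real; last first.
    by apply: ger0_real; apply: sumr_ge0 => x _; apply: exprn_ge0; exact: sumr_ge0.
  apply: ler_sum => x _; rewrite -sqr_normc lerXn2r ?nnegrE ?sumr_ge0 //.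
  apply: le_trans (ler_norm_sum _ _ _) _; apply: ler_sum => y _.
  by rewrite normrM ler_piMr.
move=> v1; apply: sup_upper_bound; last by exists v.
split; first by exists (vnorm (fun x => \sum_y O x y * v y)), v.
exists (Num.sqrt (complex.Re (\sum_x (\sum_y `|O x y|) ^+ 2))) => r [w [w1 ->]].
have K_ge0 := le_trans (sqr_ge0 _) (bounded w w1).
rewrite -(ler_pXn2r (n := 2)) ?nnegrE ?sqrtr_ge0 // [X in _ <= X]sqr_sqrtr //; exact: bounded.
Qed.

Lemma inner_decomposition (J : finType) (O rho : op R I)
    (d : J -> C) (u : J -> I -> C) :
  (forall x y, rho x y = \sum_i d i * u i x * conjc (u i y)) ->
  inner rho O O = \sum_i d i * (vnorm (fun x => \sum_y O x y * u i y) ^+ 2)%:C.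
Proof.
move=> rho_dec.
transitivity (\sum_i \sum_a \sum_b \sum_c
    d i * (conjc (O a b) * conjc (u i b)) * (O a c * u i c)).
  rewrite innerE.
  under eq_bigr => a _ do under eq_bigr => b _ do under eq_bigr => c _ do
    rewrite rho_dec mulr_sumr.
  under eq_bigr => a _ do under eq_bigr => b _ do rewrite exchange_big /=.
  under eq_bigr => a _ do rewrite exchange_big /=.
  rewrite exchange_big /=; apply: eq_bigr => i _; apply: eq_bigr => a _.
  by apply: eq_bigr => b _; apply: eq_bigr => c _; ring.
apply: eq_bigr => i _; rewrite vnorm_sqE mulr_sumr; apply: eq_bigr => a _.
rewrite rmorph_sum mulrA mulr_sumr; apply: eq_bigr => b _.
rewrite mulr_sumr mulr_suml; apply: eq_bigr => c _.
by rewrite rmorphM; ring.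
Qed.

Lemma inner_le_opnorm (O rho : op R I) : is_state rho ->
  inner rho O O <= (opnorm O ^+ 2)%:C.
Proof.
move=> rho_state; have [_ _ rho_tr] := rho_state.
have [d [u [d_ge0 rho_dec u_norm]]] := state_decomposition rho_state.
have d_sum : \sum_i d i = 1.
  rewrite -rho_tr /optr; under [RHS]eq_bigr => x _ do rewrite rho_dec.
  rewrite exchange_big /=; apply: eq_bigr => i _.
  by rewrite -[LHS]mulr1 -(u_norm i) mulr_sumr; apply: eq_bigr => x _; rewrite mulrA.
rewrite (inner_decomposition O rho_dec).
apply: le_trans (_ : \sum_i d i * (opnorm O ^+ 2)%:C <= _); last first.
  by rewrite -mulr_suml d_sum mul1r.
apply: ler_sum => i _; apply: ler_wpM2l => //; rewrite lecR.
have Ou_le := opnorm_ub O (vnorm_eq1 (u_norm i)).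
by rewrite lerXn2r ?nnegrE ?(le_trans _ Ou_le) ?sqrtr_ge0.
Qed.

End OperatorNorm.

(** * Permuting the tensor factors *)

Section Relabel.
Variables (R : rcfType) (I : finType) (n : nat).
Local Notation C := R[i].
Local Notation T := {ffun 'I_n -> I}.
Local Notation U p := (@permop R I n p).
Implicit Types (p q : 'S_n) (g f : T) (X Y : op R T).

Definition relabel p g : T := [ffun j => g (p j)].

Definition relabel_op p X : op R T := fun g f => X (relabel p g) (relabel p f).

Lemma relabelM p q g : relabel p (relabel q g) = relabel (p * q) g.
Proof. by apply/ffunP => j; rewrite !ffunE permM. Qed.

Lemma relabelK p : cancel (relabel p) (relabel p^-1).
Proof. by move=> g; apply/ffunP => j; rewrite relabelM mulVg ffunE perm1. Qed.

Lemma relabel_inj p : injective (relabel p).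
Proof. exact: can_inj (relabelK p). Qed.

Lemma sum_relabel p (G : T -> C) : \sum_g G (relabel p g) = \sum_g G g.
Proof. by rewrite [RHS](reindex_inj (@relabel_inj p)). Qed.

Definition symmetrize X : op R T :=
  opscale (n`!%:R)^-1 (opsum (fun p => relabel_op p X)).

Lemma relabel_opM p q X : relabel_op p (relabel_op q X) = relabel_op (q * p) X.
Proof. by apply: op_ext => g f; rewrite /relabel_op !relabelM. Qed.

Lemma relabel_opid p : relabel_op p opid = opid.
Proof. by apply: op_ext => g f; rewrite /relabel_op /opid (inj_eq (@relabel_inj p)). Qed.

Lemma permop_mulE p X g f : opmul (U p) X g f = X (relabel p g) f.
Proof.
rewrite /opmul /permop -[RHS](sum_delta_mull (relabel p g) (X^~ f)).
apply: eq_bigr => h _; congr (_%:R * _); congr nat_of_bool.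
by apply/eqP/eqP => [->|->]; apply/ffunP => j; rewrite !ffunE ?permKV ?permK.
Qed.

Lemma permop_conjE p X :
  opmul (opmul (U p) X) (opadj (U p)) = relabel_op p X.
Proof.
apply: op_ext => g f; rewrite {1}/opmul /opadj /relabel_op.
rewrite -[RHS](sum_delta_mull (relabel p f) (X (relabel p g))).
apply: eq_bigr => h _; rewrite permop_mulE /permop conjc_nat mulrC.
congr (_%:R * _); congr nat_of_bool.
by apply/eqP/eqP => [->|->]; apply/ffunP => j; rewrite !ffunE ?permKV ?permK.
Qed.

Lemma relabel_opmul p X Y :
  opmul (relabel_op p X) (relabel_op p Y) = relabel_op p (opmul X Y).
Proof.
apply: op_ext => g f; rewrite /opmul /relabel_op.
exact: (sum_relabel p (fun h => X (relabel p g) h * Y h (relabel p f))).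
Qed.

Lemma inner_permop_mul D p X Y :
  inner D (opmul (U p) X) (opmul (U p) Y) = inner D X Y.
Proof.
rewrite !innerE; under eq_bigr => w _ do
  under eq_bigr => x _ do under eq_bigr => y _ do rewrite !permop_mulE.
exact: (sum_relabel p (fun w => \sum_x \sum_y conjc (X w x) * Y w y * D y x)).
Qed.

Lemma symmetrize_relabel_op p X : symmetrize (relabel_op p X) = symmetrize X.
Proof.
rewrite /symmetrize; congr opscale; apply: op_ext => g f; rewrite /opsum.
rewrite [RHS](reindex_inj (mulgI p)) /=; apply: eq_bigr => q _.
by rewrite relabel_opM.
Qed.

Lemma opadj_symmetrize X : opadj (symmetrize X) = symmetrize (opadj X).
Proof. by rewrite /symmetrize opadj_opscale opadj_opsum conjc_inv conjc_nat. Qed.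

Lemma symmetrize_opsub X Y :
  symmetrize (opsub X Y) = opsub (symmetrize X) (symmetrize Y).
Proof.
by apply: op_ext => g f; rewrite /symmetrize /opscale /opsum /opsub sumrB mulrBr.
Qed.

Lemma symmetrize_opscale a X : symmetrize (opscale a X) = opscale a (symmetrize X).
Proof.
apply: op_ext => g f; rewrite /symmetrize /opscale /opsum /relabel_op -mulr_sumr.
by rewrite mulrCA.
Qed.

Lemma symmetrize_opsum (J : finType) (X : J -> op R T) :
  symmetrize (opsum X) = opsum (fun j => symmetrize (X j)).
Proof.
apply: op_ext => g f; rewrite /symmetrize /opscale /opsum /relabel_op exchange_big.
by rewrite mulr_sumr.
Qed.

Lemma symmetrize_opid : symmetrize opid = opid.
Proof.
apply: op_ext => g f; rewrite /symmetrize /opscale /opsum.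
under eq_bigr do rewrite relabel_opid.
rewrite sumr_const card_Sn; field.
by rewrite pnatr_eq0 -lt0n fact_gt0.
Qed.

Variable rho : op R I.
Local Notation rhon := (@tens_pow R I n rho).

Lemma tens_pow_relabel p g f : rhon (relabel p g) (relabel p f) = rhon g f.
Proof.
rewrite /tens_pow; under eq_bigr do rewrite !ffunE.
by rewrite [RHS](reindex_inj (@perm_inj _ p)).
Qed.

Lemma expect_relabel_op p X : expect rhon (relabel_op p X) = expect rhon X.
Proof.
rewrite !expectE -[RHS](sum_relabel p); apply: eq_bigr => g _.
rewrite -[RHS](sum_relabel p); apply: eq_bigr => f _.
by rewrite tens_pow_relabel.
Qed.

Lemma expect_symmetrize X : expect rhon (symmetrize X) = expect rhon X.
Proof.
rewrite expect_opscale expect_opsum; under eq_bigr do rewrite expect_relabel_op.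
rewrite sumr_const card_Sn; field.
by rewrite pnatr_eq0 -lt0n fact_gt0.
Qed.

Lemma inner_relabel_op p X Y :
  inner rhon (relabel_op p X) (relabel_op p Y) = inner rhon X Y.
Proof.
rewrite /inner; have -> : opadj (relabel_op p X) = relabel_op p (opadj X) by [].
by rewrite relabel_opmul expect_relabel_op.
Qed.

Lemma inner_symmetrize_le W : is_state rho ->
  inner rhon (symmetrize W) (symmetrize W) <= inner rhon W W.
Proof.
move=> /(@tens_pow_state _ _ n) [_ rhon_psd _].
have nfact_neq0 : n`!%:R != 0 :> C by rewrite pnatr_eq0 -lt0n fact_gt0.
rewrite inner_opscalel inner_opscaler conjc_inv conjc_nat mulrA.
have sum_le := inner_opsum_le rhon_psd (fun p => relabel_op p W).
apply: le_trans (ler_wpM2l _ sum_le) _; first by rewrite mulr_ge0 ?invr_ge0 ?ler0n.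
under eq_bigr do rewrite inner_relabel_op.
rewrite sumr_const card_Sn mulr_natl le_eqVlt; apply/orP; left; apply/eqP.
by field.
Qed.

End Relabel.

(** * Operators acting on some of the tensor factors *)

Section Locality.
Variables (R : rcfType) (I : finType) (n : nat).
Local Notation C := R[i].
Local Notation T := {ffun 'I_n -> I}.
Implicit Types (S : pred 'I_n) (g f : T) (X Y : op R T).

Definition agree_off S g f : bool := [forall q, ~~ S q ==> (g q == f q)].

(* [X = X_S ⊗ id]: [X g f] vanishes unless [g] and [f] agree off [S], and then it only
   depends on their values on [S]. *)
Definition acts_on S X : Prop :=
  (forall g f, ~~ agree_off S g f -> X g f = 0) /\
  (forall g g' f f', (forall q, S q -> g q = g' q) -> (forall q, S q -> f q = f' q) ->
     agree_off S g f -> agree_off S g' f' -> X g f = X g' f').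

Definition merge S (a b : T) : T := [ffun q => if S q then a q else b q].

Lemma agree_off_sym S g f : agree_off S g f = agree_off S f g.
Proof. by apply: eq_forallb => q; rewrite eq_sym. Qed.

Lemma acts_on_opadj S X : acts_on S X -> acts_on S (opadj X).
Proof.
move=> [off_zero local]; split=> [g f|g g' f f' eg ef gf g'f'].
  by rewrite agree_off_sym => /off_zero; rewrite /opadj => ->; rewrite conjc0.
by rewrite /opadj (local f f' g g') // agree_off_sym.
Qed.

Lemma acts_on_sub S S' X : (forall q, S q -> S' q) -> acts_on S X -> acts_on S' X.
Proof.
move=> sub [off_zero local]; split.
  move=> g f disagree; apply: off_zero; apply: contra disagree => /forallP agree.
  apply/forallP => q; apply/implyP => nS'q; have /implyP := agree q; apply.
  by apply: contra nS'q; exact: sub.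
move=> g g' f f' eg ef /forallP gf /forallP g'f'.
have agree_eq : agree_off S g f = agree_off S g' f'.
  apply/forallP/forallP => agree q; apply/implyP => Sq;
    have /implyP/(_ Sq)/eqP := agree q; case: (boolP (S' q)) => S'q.
  - by rewrite eg // ef // => ->.
  - by have /implyP/(_ S'q)/eqP -> := g'f' q.
  - by rewrite -eg // -ef // => ->.
  - by have /implyP/(_ S'q)/eqP -> := gf q.
have [agree|disagree] := boolP (agree_off S g f).
  by apply: local => // [q /sub|q /sub|]; [exact: eg|exact: ef|rewrite -agree_eq].
by rewrite !off_zero // -agree_eq.
Qed.

Lemma acts_on_merge S X x0 : acts_on S X ->
  forall g f, X g f = X (merge S g x0) (merge S f x0) * (agree_off S g f)%:R.
Proof.
move=> [off_zero local] g f; have [agree|] := boolP (agree_off S g f); last first.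
  by move=> /off_zero ->; rewrite mulr0.
rewrite mulr1; apply: local => // [q Sq|q Sq|]; rewrite ?ffunE ?Sq //.
by apply/forallP => q; apply/implyP => nSq; rewrite !ffunE (negbTE nSq).
Qed.

Lemma merge_predC S a b : merge (predC S) a b = merge S b a.
Proof. by apply/ffunP => q; rewrite !ffunE /=; case: (S q). Qed.

Lemma agree_off_merge S x0 g f :
  agree_off S g f = (merge S x0 g == merge S x0 f).
Proof.
apply/forallP/eqP => [agree|eC q]; last first.
  by apply/implyP => nSq; move/ffunP/(_ q): eC; rewrite !ffunE (negbTE nSq) => ->.
apply/ffunP => q; rewrite !ffunE; case: (boolP (S q)) => // nSq.
by have /implyP/(_ nSq)/eqP := agree q.
Qed.

Variable rho : op R I.
Local Notation rhon := (@tens_pow R I n rho).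

Definition tens_pow_on S g f : C := \prod_(q | S q) rho (g q) (f q).

Section Inhabited.
Variables (S : pred 'I_n) (x0 : T).
Local Notation pS g := (merge S g x0).
Local Notation pC g := (merge S x0 g).

Lemma tens_pow_merge g f :
  rhon g f = tens_pow_on S (pS g) (pS f) * tens_pow_on (predC S) (pC g) (pC f).
Proof.
rewrite /tens_pow (bigID S) /=; congr (_ * _); apply: eq_bigr => q Sq;
  by rewrite !ffunE ?(negbTE Sq) ?Sq.
Qed.

Lemma sum_merge_split (Phi : T -> T -> C) :
  \sum_g Phi (pS g) (pC g) = \sum_(a | pS a == a) \sum_(b | pC b == b) Phi a b.
Proof.
rewrite pair_big_dep /=.
rewrite (reindex_onto (fun g => (pS g, pC g)) (fun ab => merge S ab.1 ab.2)) /=.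
  apply: eq_bigl => g; apply/esym/andP; split; first (apply/andP; split).
  - by apply/eqP/ffunP => q; rewrite !ffunE; case: (S q).
  - by apply/eqP/ffunP => q; rewrite !ffunE; case: (S q).
  - by apply/eqP/ffunP => q; rewrite !ffunE; case: (S q).
move=> [a b] /= /andP [/eqP ea /eqP eb]; congr (_, _).
- by rewrite -{2}ea; apply/ffunP => q; rewrite !ffunE; case: (S q).
- by rewrite -{2}eb; apply/ffunP => q; rewrite !ffunE; case: (S q).
Qed.

Lemma sum2_merge_split (al be : T -> T -> C) :
  \sum_g \sum_f al (pS g) (pS f) * be (pC g) (pC f) =
  (\sum_(a | pS a == a) \sum_(a' | pS a' == a') al a a') *
  (\sum_(b | pC b == b) \sum_(b' | pC b' == b') be b b').
Proof.
under eq_bigr => g _ do rewrite (sum_merge_split (fun a' b' => al (pS g) a' * be (pC g) b')).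
rewrite (sum_merge_split (fun a b => \sum_(a' | pS a' == a') \sum_(b' | pC b' == b')
   al a a' * be b b')).
rewrite mulr_suml; apply: eq_bigr => a _.
rewrite mulr_suml exchange_big /=; apply: eq_bigr => b _.
rewrite mulr_sumr; apply: eq_bigr => a' _.
by rewrite mulr_sumr.
Qed.

Lemma opmul_acts_on_disjoint X Y : acts_on S X -> acts_on (predC S) Y ->
  forall g f, opmul X Y g f = X (pS g) (pS f) * Y (pC g) (pC f).
Proof.
move=> /(acts_on_merge x0) eX /(acts_on_merge x0) eY g f.
have mergeS : pS (merge S f g) = pS f by apply/ffunP => q; rewrite !ffunE; case: (S q).
have mergeC : pC (merge S f g) = pC g by apply/ffunP => q; rewrite !ffunE; case: (S q).
rewrite -mergeS -mergeC /opmul.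
rewrite -[RHS](sum_delta_mull (merge S f g) (fun z => X (pS g) (pS z) * Y (pC z) (pC f))).
apply: eq_bigr => z _; rewrite eX eY !merge_predC.
have -> : (z == merge S f g) = agree_off S g z && agree_off (predC S) z f.
  apply/eqP/andP => [->|[/forallP agS /forallP agC]].
    split; apply/forallP => q; apply/implyP; rewrite ?ffunE /=.
      by move=> /negbTE ->.
    by rewrite negbK => ->.
  apply/ffunP => q; rewrite ffunE; case: (boolP (S q)) => Sq.
    by have /implyP := agC q; rewrite /= Sq => /(_ isT)/eqP.
  by have /implyP/(_ Sq)/eqP := agS q.
by rewrite -mulnb natrM; ring.
Qed.

Hypothesis rho_tr : optr rho = 1.

Lemma expect_opmul_acts_on_inhabited X Y : acts_on S X -> acts_on (predC S) Y ->
  expect rhon (opmul X Y) = expect rhon X * expect rhon Y.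
Proof.
move=> actX actY.
pose al a a' := X a a' * tens_pow_on S a' a.
pose be b b' := Y b b' * tens_pow_on (predC S) b' b.
pose ga b b' := (b == b')%:R * tens_pow_on (predC S) b' b.
pose de a a' := (a == a')%:R * tens_pow_on S a' a.
have eXY : expect rhon (opmul X Y) = \sum_g \sum_f al (pS g) (pS f) * be (pC g) (pC f).
  rewrite expectE; apply: eq_bigr => g _; apply: eq_bigr => f _.
  by rewrite (opmul_acts_on_disjoint actX actY) tens_pow_merge /al /be; ring.
have eX : expect rhon X = \sum_g \sum_f al (pS g) (pS f) * ga (pC g) (pC f).
  rewrite expectE; apply: eq_bigr => g _; apply: eq_bigr => f _.
  by rewrite (acts_on_merge x0 actX) tens_pow_merge (agree_off_merge _ x0) /al /ga; ring.
have eY : expect rhon Y = \sum_g \sum_f de (pS g) (pS f) * be (pC g) (pC f).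
  rewrite expectE; apply: eq_bigr => g _; apply: eq_bigr => f _.
  rewrite (acts_on_merge x0 actY) tens_pow_merge (agree_off_merge _ x0) !merge_predC.
  by rewrite /de /be; ring.
have trace1 : \sum_g \sum_f de (pS g) (pS f) * ga (pC g) (pC f) = 1.
  rewrite -(expr1n C n) -rho_tr -tens_pow_trace; apply: eq_bigr => g _.
  rewrite -(sum_delta_mull g (fun f => rhon f g)); apply: eq_bigr => f _.
  rewrite /de /ga tens_pow_merge.
  have -> : (f == g) = (pS g == pS f) && (pC g == pC f).
    apply/eqP/andP => [->|[/eqP eS /eqP eC]] //; apply/ffunP => q.
    move/ffunP/(_ q): eS; move/ffunP/(_ q): eC; rewrite !ffunE.
    by case: (S q) => [_ ->|-> _].
  by rewrite -mulnb natrM; ring.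
rewrite eXY eX eY !sum2_merge_split; rewrite sum2_merge_split in trace1.
by rewrite -[LHS]mulr1 -trace1; ring.
Qed.

End Inhabited.

Lemma expect_opmul_acts_on S X Y : optr rho = 1 ->
  acts_on S X -> acts_on (predC S) Y ->
  expect rhon (opmul X Y) = expect rhon X * expect rhon Y.
Proof.
move=> rho_tr; case: (pickP (fun _ : T => true)) => [x0 _|T_empty].
  exact: expect_opmul_acts_on_inhabited.
have sum0 (F : T -> C) : \sum_g F g = 0 by rewrite big_pred0.
by move=> _ _; rewrite !expectE !sum0 mulr0.
Qed.

End Locality.

(** * Permutations of the slots *)

(* Innermost conditionals first, so that [lia] only sees if-free hypotheses. *)
Ltac case_innermost_ifs :=
  repeat match goal with |- context [if ?c then _ else _] =>
    lazymatch c with context [if _ then _ else _] => fail | _ =>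
      let H := fresh "H" in case H: c end end.

Local Open Scope nat_scope.

(* The reflection [i |-> 1 - i (mod k)] of the first [k] slots: it conjugates [shift_perm n k]
   into its inverse and swaps slot [0] with its image under the shift. *)
Definition mirror_nat (n k i : nat) : nat :=
  if i < minn k n then
    if minn k n == 1 then 0 else if i <= 1 then 1 - i else (minn k n).+1 - i
  else i.

Lemma mirror_nat_lt n k (i : 'I_n) : mirror_nat n k i < n.
Proof.
rewrite /mirror_nat; have := ltn_ord i; have := geq_minr k n.
by case_innermost_ifs; lia.
Qed.

Definition mirror_fun n k (i : 'I_n) : 'I_n := Ordinal (mirror_nat_lt k i).

Lemma mirror_fun_inj n k : injective (@mirror_fun n k).
Proof.
move=> [i ilt] [j jlt] /(congr1 val) /=; rewrite /mirror_nat => eij.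
apply: val_inj => /=; move: eij; have := geq_minr k n.
by case_innermost_ifs; lia.
Qed.

Definition mirror_perm n k : 'S_n := perm (@mirror_fun_inj n k).

Definition rot_nat (n c i : nat) : nat := if i + c < n then i + c else i + c - n.

Lemma rot_nat_lt n (c i : 'I_n) : rot_nat n c i < n.
Proof. by rewrite /rot_nat; have := ltn_ord i; have := ltn_ord c; case: ifP; lia. Qed.

Definition rot_fun n (c i : 'I_n) : 'I_n := Ordinal (rot_nat_lt c i).

Lemma rot_fun_inj n (c : 'I_n) : injective (rot_fun c).
Proof.
move=> [i ilt] [j jlt] /(congr1 val) /=; rewrite /rot_nat => eij.
by apply: val_inj => /=; move: eij; have := ltn_ord c; case: ifP; case: ifP; lia.
Qed.

Definition rot_perm n (c : 'I_n) : 'S_n := perm (@rot_fun_inj n c).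

Lemma rot_perm_block n (c : 'I_n) k (i : 'I_n) : c + k <= n ->
  (c <= rot_perm c i < c + k) = (i < k).
Proof.
move=> ckn; rewrite permE /= /rot_nat; have := ltn_ord i.
by case: ifP; case: (ltnP i k); lia.
Qed.

Section ShiftMirror.
Variables (n k : nat).
Hypotheses (n_gt0 : 0 < n) (k_gt0 : 0 < k) (k_le_n : k <= n).
Local Notation s := (shift_perm n k).
Local Notation r := (mirror_perm n k).
Local Notation o0 := (Ordinal n_gt0).

Lemma minn_k_n : minn k n = k.
Proof. exact/minn_idPl. Qed.

Lemma shift_perm_lt (i : 'I_n) : i < k -> s i < k.
Proof. by rewrite permE /= /shift_nat minn_k_n; case_innermost_ifs; lia. Qed.

Lemma shift_perm_ge (i : 'I_n) : k <= i -> s i = i.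
Proof.
move=> ki; apply: val_inj; rewrite permE /= /shift_nat minn_k_n.
by case_innermost_ifs; lia.
Qed.

Lemma mirror_shift0 : r (s o0) = o0.
Proof.
apply: val_inj; rewrite !permE /= /mirror_nat /shift_nat minn_k_n.
by case_innermost_ifs; lia.
Qed.

Lemma mirror0 : r o0 = s o0.
Proof.
apply: val_inj; rewrite !permE /= /mirror_nat /shift_nat minn_k_n.
by case_innermost_ifs; lia.
Qed.

Lemma shift_mirror_shift j : s (r (s j)) = r j.
Proof.
apply: val_inj; rewrite !permE /= /mirror_nat /shift_nat minn_k_n.
by have := ltn_ord j; case_innermost_ifs; lia.
Qed.

End ShiftMirror.

Lemma leq_divn_mul_double n k : 0 < k -> k <= n -> n <= (n %/ k * k).*2.
Proof.
move=> k_gt0 k_le_n; have := ltn_ceil n k_gt0; have : k <= n %/ k * k.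
  by rewrite leq_pmull // divn_gt0.
by rewrite mulSn -addnn; lia.
Qed.

Lemma disjoint_blocks k j l q :
  j != l -> j * k <= q < j * k + k -> ~~ (l * k <= q < l * k + k).
Proof.
move=> jl /andP [jq qj]; apply/negP => /andP [lq ql].
case: (ltngtP j l) jl => // jl _.
  have : j.+1 * k <= l * k by rewrite leq_mul2r jl orbT.
  by rewrite mulSn; lia.
have : l.+1 * k <= j * k by rewrite leq_mul2r jl orbT.
by rewrite mulSn; lia.
Qed.

Local Open Scope ring_scope.

Lemma invr_divn_le (F : numFieldType) n k : (0 < k)%N -> (k <= n)%N ->
  ((n %/ k)%:R : F)^-1 <= (2 * k)%:R / n%:R.
Proof.
move=> k_gt0 k_le_n; have n_gt0 : (0 < n)%N := leq_trans k_gt0 k_le_n.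
have m_gt0 : (0 < n %/ k)%N by rewrite divn_gt0.
rewrite ler_pdivlMr ?ltr0n // mulrC ler_pdivrMr ?ltr0n // -natrM ler_nat.
by have := leq_divn_mul_double k_gt0 k_le_n; lia.
Qed.

(** * Variance of [O_k] *)

Section Proposition.
Variables (R : realType) (I : finType) (n k : nat) (O rho : op R I).
Hypotheses (n_gt0 : (0 < n)%N) (k_gt0 : (0 < k)%N) (k_le_n : (k <= n)%N).
Hypotheses (O_herm : is_hermitian O) (rho_state : is_state rho).
Local Notation C := R[i].
Local Notation T := {ffun 'I_n -> I}.
Local Notation rhon := (@tens_pow R I n rho).
Local Notation s := (shift_perm n k).
Local Notation r := (mirror_perm n k).
Local Notation o0 := (Ordinal n_gt0).

Definition shiftO : op R T := opmul (@permop R I n s) (embed_at o0 O).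

Lemma O_kE : O_k n_gt0 k O = symmetrize shiftO.
Proof.
rewrite /O_k /symmetrize; congr opscale; apply: op_ext => g f.
by apply: eq_bigr => p _; rewrite [opmul (opmul _ _) (embed_at _ _)]opmulA permop_conjE.
Qed.

Lemma shiftOE g f :
  shiftO g f = O (g (s o0)) (f o0) * [forall j, (j != o0) ==> (g (s j) == f j)]%:R.
Proof.
rewrite /shiftO permop_mulE /embed_at ffunE; congr (_ * _%:R).
by congr nat_of_bool; apply: eq_forallb => j; rewrite ffunE.
Qed.

Lemma shiftO_mirror : relabel_op r shiftO = opadj shiftO.
Proof.
apply: op_ext => g f; rewrite /relabel_op /opadj !shiftOE rmorphM /= conjc_nat.
rewrite !ffunE mirror_shift0 // mirror0 // -O_herm; congr (_ * _%:R); congr nat_of_bool.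
apply/forallP/forallP => agree j; apply/implyP => j_neq0.
  pose i := (s^-1)%g ((r^-1)%g j); have rsi : r (s i) = j by rewrite /i !permKV.
  have i_neq0 : i != o0.
    by apply: contra j_neq0 => /eqP i0; rewrite -rsi i0 mirror_shift0.
  have /implyP/(_ i_neq0) := agree i; rewrite !ffunE rsi eq_sym.
  by rewrite -(shift_mirror_shift n_gt0 k_gt0 k_le_n) rsi.
have rsj_neq0 : r (s j) != o0.
  apply: contra j_neq0 => /eqP rsj0; apply/eqP; apply: (@perm_inj _ s).
  by apply: (@perm_inj _ r); rewrite rsj0 mirror_shift0.
have /implyP/(_ rsj_neq0) := agree (r (s j)).
by rewrite !ffunE shift_mirror_shift // eq_sym.
Qed.

Lemma O_k_hermitian : is_hermitian (O_k n_gt0 k O).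
Proof.
apply: opadj_hermitian.
by rewrite O_kE opadj_symmetrize -shiftO_mirror symmetrize_relabel_op.
Qed.

Lemma acts_on_relabel_shiftO (p : 'S_n) (S : pred 'I_n) :
  (forall i, S (p i) = (i < k)%N) -> acts_on S (relabel_op p shiftO).
Proof.
move=> Sp; split=> [g f|g g' f f' eg ef /forallP agree /forallP agree'].
  move=> /forallPn [q]; rewrite negb_imply => /andP [nSq gfq].
  rewrite /relabel_op shiftOE; apply/eqP; rewrite mulf_eq0 pnatr_eq0 eqb0; apply/orP; right.
  apply/forallPn; exists ((p^-1)%g q); rewrite negb_imply.
  have k_le : (k <= (p^-1)%g q)%N by rewrite leqNgt -Sp permKV.
  apply/andP; split; first by apply: contraTneq k_le => ->; rewrite -ltnNge.
  by rewrite !ffunE shift_perm_ge // permKV.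
rewrite /relabel_op !shiftOE !ffunE eg ?Sp ?shift_perm_lt // ef ?Sp //.
congr (_ * _%:R); congr nat_of_bool; apply: eq_forallb => i; rewrite !ffunE.
have [i_lt|k_le] := ltnP i k; first by rewrite eg ?Sp ?shift_perm_lt // ef ?Sp.
rewrite shift_perm_ge //.
have /implyP := agree (p i); have /implyP := agree' (p i).
by rewrite Sp ltnNge k_le => /(_ isT)/eqP -> /(_ isT)/eqP ->; rewrite !eqxx.
Qed.

Local Notation m := (n %/ k)%N.

Lemma block_end_le (j : 'I_m) : (j * k + k <= n)%N.
Proof.
have : (j.+1 * k <= n)%N by rewrite -leq_divRL.
by rewrite mulSn addnC.
Qed.

Lemma block_start_lt (j : 'I_m) : (j * k < n)%N.
Proof. by apply: leq_trans (block_end_le j); lia. Qed.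

Definition block (j : 'I_m) : pred 'I_n := fun q => (j * k <= q < j * k + k)%N.

Definition block_shiftO (j : 'I_m) : op R T :=
  relabel_op (rot_perm (Ordinal (block_start_lt j))) shiftO.

Lemma acts_on_block_shiftO j : acts_on (block j) (block_shiftO j).
Proof.
apply: acts_on_relabel_shiftO => i.
by rewrite /block rot_perm_block //; exact: block_end_le.
Qed.

Local Notation mu := (expect rhon shiftO).

Lemma expect_block_shiftO j : expect rhon (block_shiftO j) = mu.
Proof. exact: expect_relabel_op. Qed.

Lemma inner_block_shiftO_off j l : j != l ->
  inner rhon (block_shiftO j) (block_shiftO l) = conjc mu * mu.
Proof.
move=> jl; have [rho_herm _ rho_tr] := rho_state.
rewrite /inner (@expect_opmul_acts_on _ _ _ _ (block j)) //.
- by rewrite expect_opadj ?expect_block_shiftO //; exact: tens_pow_hermitian.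
- exact/acts_on_opadj/acts_on_block_shiftO.
apply: acts_on_sub (acts_on_block_shiftO l) => q lq /=.
have lj : (l : nat) != j by rewrite eq_sym.
exact: disjoint_blocks lj lq.
Qed.

Lemma inner_block_shiftO_diag j :
  inner rhon (block_shiftO j) (block_shiftO j) = inner rho O O.
Proof.
by rewrite inner_relabel_op inner_permop_mul inner_embed_at //; case: rho_state.
Qed.

Definition block_avg : op R T :=
  opscale (m%:R)^-1 (opsum (fun j : 'I_m => center rhon (block_shiftO j))).

Lemma natr_divn_neq0 : (m%:R : C) != 0.
Proof. by rewrite pnatr_eq0 -lt0n divn_gt0. Qed.

Lemma center_O_k : center rhon (O_k n_gt0 k O) = symmetrize block_avg.
Proof.
have sym_center j : symmetrize (center rhon (block_shiftO j)) = center rhon (symmetrize shiftO).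
  rewrite /center symmetrize_opsub symmetrize_opscale symmetrize_opid.
  by rewrite expect_symmetrize expect_block_shiftO /block_shiftO symmetrize_relabel_op.
rewrite O_kE /block_avg symmetrize_opscale symmetrize_opsum (funext sym_center).
apply: op_ext => g f; rewrite /opscale /opsum sumr_const card_ord.
by field; exact: natr_divn_neq0.
Qed.

Lemma inner_block_avg :
  inner rhon block_avg block_avg = (m%:R)^-1 * (inner rho O O - conjc mu * mu).
Proof.
have [rhon_herm _ rhon_tr] := tens_pow_state n rho_state.
rewrite inner_opscalel inner_opscaler inner_opsum_orthogonal => [|j l jl]; last first.
  by rewrite inner_center // inner_block_shiftO_off // !expect_block_shiftO subrr.
under eq_bigr do rewrite inner_center // inner_block_shiftO_diag expect_block_shiftO.
rewrite sumr_const card_ord conjc_inv conjc_nat.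
by field; exact: natr_divn_neq0.
Qed.

Lemma variance_O_k_le : variance rho (O_k n_gt0 k O) <= (m%:R)^-1 * inner rho O O.
Proof.
have [rhon_herm _ rhon_tr] := tens_pow_state n rho_state.
have -> : variance rho (O_k n_gt0 k O) =
    inner rhon (center rhon (O_k n_gt0 k O)) (center rhon (O_k n_gt0 k O)).
  by rewrite inner_center_self //; exact: O_k_hermitian.
rewrite center_O_k; apply: le_trans (inner_symmetrize_le _ rho_state) _.
rewrite inner_block_avg ler_wpM2l ?invr_ge0 ?ler0n // gerDl oppr_le0.
by rewrite mulrC; exact: mul_conjC_ge0.
Qed.

End Proposition.

Theorem proposition2p20 (R : realType) (I : finType) (O rho : op R I)
  (n k : nat) (hn : (0 < n)%N) (hk1 : (1 <= k)%N) (hkn : (k <= n)%N) :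
  is_hermitian O -> is_state rho ->
  variance rho (O_k hn k O)
    <= ((2 * k)%:R * (opnorm O) ^+ 2 / n%:R)%:C.
Proof.
move=> O_herm rho_state.
apply: le_trans (variance_O_k_le hn hk1 hkn O_herm rho_state) _.
apply: le_trans (ler_wpM2l _ (inner_le_opnorm O rho_state)) _.
  by rewrite invr_ge0 ler0n.
have -> : ((2 * k)%:R * opnorm O ^+ 2 / n%:R)%:C = (2 * k)%:R / n%:R * (opnorm O ^+ 2)%:C.
  by rewrite !rmorphM rmorphV ?unitfE ?pnatr_eq0 -?lt0n // !rmorph_nat mulrAC.
by apply: ler_wpM2r (invr_divn_le _ hk1 hkn); rewrite lecR sqr_ge0.
Qed.
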